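(* Let $A_1,\dots,A_n$ be events in a probability space and let $j,k\in\{1,\dots,n\}$, with $n>2-\delta_{jk}$, where $\delta_{jk}$ is the Kronecker delta. Then \[ \Pr\Big(\bigcup_{i=1}^n A_i\Big) \ge \frac{1}{n-2+\delta_{jk}}\Big(\sum_{i=1}^n\Pr(A_i) - \sum_{\substack{i=1\\ i\ne j}}^n\Pr(A_i\cap A_j) - \sum_{\substack{i=1\\ i\ne j,k}}^n\Pr(A_i\cap A_k) + \sum_{\substack{i=1\\ i\ne j,k}}^n\Pr(A_i\cap A_j\cap A_k)\Big). \] *)

From Stdlib Require Import Reals Lra Lia.
Open Scope R_scope.

Record prob_space (Omega : Type) := {
  event : (Omega -> Prop) -> Prop;
  Pr : (Omega -> Prop) -> R;
  event_full : event (fun _ => True);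
  event_compl : forall A, event A -> event (fun w => ~ A w);
  event_union : forall A : nat -> (Omega -> Prop),
      (forall m, event (A m)) -> event (fun w => exists m, A m w);
  Pr_nonneg : forall A, event A -> 0 <= Pr A;
  Pr_full : Pr (fun _ => True) = 1;
  Pr_sigma_additive : forall A : nat -> (Omega -> Prop),
      (forall m, event (A m)) ->
      (forall m p, m <> p -> forall w, A m w -> A p w -> False) ->
      infinite_sum (fun m => Pr (A m)) (Pr (fun w => exists m, A m w))
}.
Arguments event {Omega} _ _.
Arguments Pr {Omega} _ _.

Fixpoint rsum (f : nat -> R) (n : nat) : R :=
  match n with
  | O => 0
  | S m => rsum f m + f (S m)
  end.

Definition kdelta (j k : nat) : nat := if Nat.eqb j k then 1%nat else 0%nat.

(* Put a := Pr(A_j), r := Pr(U \ A_j ∩ A_k) and q := Pr(U \ (A_j ∪ A_k)) for the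
   union U, so that Pr(U) = a + r + q.  By inclusion-exclusion the i-th summand on
   the right is Pr(A_j) = a for i = j, Pr(A_k \ A_j) <= r for i = k <> j, and
   Pr(A_i \ (A_j ∪ A_k)) <= q otherwise.  Hence the bracket is at most
   (n - 2) q + a + r when j <> k and (n - 1) q + a when j = k, which is at most
   (n - 2 + δ_jk) Pr(U) as soon as n - 2 + δ_jk >= 1. *)
From Stdlib Require Import Reals Lra Lia Classical FunctionalExtensionality PropExtensionality.
Open Scope R_scope.

Lemma rsum_le (f g : nat -> R) (n : nat) :
  (forall i, (1 <= i <= n)%nat -> f i <= g i) -> rsum f n <= rsum g n.
Proof.
  induction n as [|n IH]; intros H; simpl; [lra|].
  apply Rplus_le_compat; [apply IH; intros|]; apply H; lia.
Qed.

Lemma rsum_plus (f g : nat -> R) (n : nat) :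
  rsum (fun i => f i + g i) n = rsum f n + rsum g n.
Proof. induction n as [|n IH]; simpl; [ring | rewrite IH; ring]. Qed.

Lemma rsum_minus (f g : nat -> R) (n : nat) :
  rsum (fun i => f i - g i) n = rsum f n - rsum g n.
Proof. induction n as [|n IH]; simpl; [ring | rewrite IH; ring]. Qed.

Lemma rsum_const (c : R) (n : nat) : rsum (fun _ => c) n = INR n * c.
Proof. induction n as [|n IH]; simpl rsum; [simpl; ring | rewrite IH, S_INR; ring]. Qed.

Lemma rsum_indicator_before (j : nat) (c : R) (n : nat) :
  (n < j)%nat -> rsum (fun i => if Nat.eqb i j then c else 0) n = 0.
Proof.
  induction n as [|n IH]; intros H; cbn [rsum]; [reflexivity|].
  rewrite IH by lia. destruct (Nat.eqb_spec (S n) j); [lia | ring].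
Qed.

Lemma rsum_indicator (j : nat) (c : R) (n : nat) :
  (1 <= j <= n)%nat -> rsum (fun i => if Nat.eqb i j then c else 0) n = c.
Proof.
  induction n as [|n IH]; intros H; [lia|]. cbn [rsum].
  destruct (Nat.eqb_spec (S n) j).
  - rewrite rsum_indicator_before by lia. ring.
  - rewrite IH by lia. ring.
Qed.

Section ProbabilitySpace.
Context {Omega : Type} (P : prob_space Omega).

Lemma Pr_ext (X Y : Omega -> Prop) : (forall w, X w <-> Y w) -> Pr P X = Pr P Y.
Proof.
  intros H. f_equal. apply functional_extensionality; intro w.
  apply propositional_extensionality; auto.
Qed.

Lemma event_ext (X Y : Omega -> Prop) : (forall w, X w <-> Y w) -> event P X -> event P Y.
Proof.
  intros H E. replace Y with X; auto.
  apply functional_extensionality; intro w. apply propositional_extensionality; auto.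
Qed.

Lemma event_empty : event P (fun _ => False).
Proof.
  apply (event_ext (fun _ => ~ True)); [tauto|]. apply event_compl, event_full.
Qed.

Lemma event_or (X Y : Omega -> Prop) :
  event P X -> event P Y -> event P (fun w => X w \/ Y w).
Proof.
  intros EX EY.
  apply (event_ext (fun w => exists m, (match m with O => X | _ => Y end) w)).
  - intro w; split.
    + intros [[|m] H]; auto.
    + intros [H|H]; [exists O | exists 1%nat]; auto.
  - apply event_union. intros [|m]; auto.
Qed.

Lemma event_and (X Y : Omega -> Prop) :
  event P X -> event P Y -> event P (fun w => X w /\ Y w).
Proof.
  intros EX EY.
  apply (event_ext (fun w => ~ (~ X w \/ ~ Y w))).
  - intro w; split; [intro H; split; apply NNPP; tauto | tauto].
  - apply event_compl, event_or; apply event_compl; auto.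
Qed.

Ltac events := repeat (apply event_and || apply event_compl); auto.

Lemma Pr_empty : Pr P (fun _ => False) = 0.
Proof.
  set (c := Pr P (fun _ => False)).
  assert (Hsum : infinite_sum (fun _ : nat => c) c).
  { unfold c at 2. rewrite (Pr_ext (fun _ => False) (fun w => exists _ : nat, False))
      by (intro; split; [tauto | intros [_ []]]).
    apply (Pr_sigma_additive _ P (fun _ _ => False)); [intro; apply event_empty | tauto]. }
  assert (c0 : 0 <= c) by apply Pr_nonneg, event_empty.
  destruct (Req_dec c 0) as [|Hc]; auto.
  (* consecutive partial sums differ by c, so they cannot both be within c/2 of c *)
  destruct (Hsum (c / 2)) as [N HN]; [lra|].
  pose proof (HN N (le_n N)) as H1. pose proof (HN (S N) (le_S _ _ (le_n N))) as H2.
  unfold R_dist in *. simpl in H2.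
  apply Rabs_def2 in H1. apply Rabs_def2 in H2. lra.
Qed.

Lemma Pr_disjoint_or (X Y : Omega -> Prop) :
  event P X -> event P Y -> (forall w, X w -> Y w -> False) ->
  Pr P (fun w => X w \/ Y w) = Pr P X + Pr P Y.
Proof.
  intros EX EY D.
  set (s := fun m : nat => match m with O => X | 1%nat => Y | _ => fun _ => False end).
  assert (Es : forall m, event P (s m)) by (intros [|[|m]]; simpl; auto using event_empty).
  assert (Ds : forall m p, m <> p -> forall w, s m w -> s p w -> False).
  { intros [|[|m]] [|[|p]] Hmp w; simpl; try tauto; intros; eapply D; eauto. }
  assert (Hpartial : forall t, sum_f_R0 (fun m => Pr P (s m)) (S t) = Pr P X + Pr P Y).
  { induction t as [|t IH]; [simpl; ring|].
    rewrite tech5, IH. simpl. rewrite Pr_empty. ring. }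
  assert (Hsum : infinite_sum (fun m => Pr P (s m)) (Pr P X + Pr P Y)).
  { intros eps Heps. exists 1%nat. intros [|m] Hm; [lia|].
    rewrite Hpartial. unfold R_dist. rewrite Rminus_diag, Rabs_R0. auto. }
  rewrite <- (uniqueness_sum _ _ _ (Pr_sigma_additive _ P s Es Ds) Hsum).
  apply Pr_ext. intro w; split.
  - intros [H|H]; [exists O | exists 1%nat]; auto.
  - intros [[|[|m]] Hm]; simpl in Hm; tauto.
Qed.

Lemma Pr_split (X Y : Omega -> Prop) : event P X -> event P Y ->
  Pr P X = Pr P (fun w => X w /\ Y w) + Pr P (fun w => X w /\ ~ Y w).
Proof.
  intros EX EY. rewrite <- Pr_disjoint_or by (events; intros w; tauto).
  apply Pr_ext. intro w. destruct (classic (Y w)); tauto.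
Qed.

Lemma Pr_le (X Y : Omega -> Prop) :
  event P X -> event P Y -> (forall w, X w -> Y w) -> Pr P X <= Pr P Y.
Proof.
  intros EX EY H. rewrite (Pr_split Y X EY EX).
  rewrite (Pr_ext (fun w => Y w /\ X w) X) by (intro w; split; [tauto | auto]).
  assert (0 <= Pr P (fun w => Y w /\ ~ X w)) by (apply Pr_nonneg; events).
  lra.
Qed.

Lemma Pr_inter_compl2 (X Y Z : Omega -> Prop) : event P X -> event P Y -> event P Z ->
  Pr P X - Pr P (fun w => X w /\ Y w) - Pr P (fun w => X w /\ Z w)
    + Pr P (fun w => X w /\ Y w /\ Z w)
  = Pr P (fun w => X w /\ ~ Y w /\ ~ Z w).
Proof.
  intros EX EY EZ.
  rewrite (Pr_split X Y), (Pr_split (fun w => X w /\ ~ Y w) Z) by events.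
  rewrite (Pr_split (fun w => X w /\ Z w) Y) by events.
  rewrite (Pr_ext (fun w => (X w /\ Z w) /\ Y w) (fun w => X w /\ Y w /\ Z w)) by (intro; tauto).
  rewrite (Pr_ext (fun w => (X w /\ Z w) /\ ~ Y w) (fun w => (X w /\ ~ Y w) /\ Z w)) by (intro; tauto).
  rewrite (Pr_ext (fun w => (X w /\ ~ Y w) /\ ~ Z w) (fun w => X w /\ ~ Y w /\ ~ Z w)) by (intro; tauto).
  ring.
Qed.

Section UnionLowerBound.
Context (n : nat) (A : nat -> (Omega -> Prop))
  (hA : forall i, (1 <= i <= n)%nat -> event P (A i))
  (j k : nat) (hj : (1 <= j <= n)%nat) (hk : (1 <= k <= n)%nat).

Let U := fun w => exists i, (1 <= i <= n)%nat /\ A i w.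
Let a := Pr P (A j).
Let r := Pr P (fun w => U w /\ ~ A j w /\ A k w).
Let q := Pr P (fun w => U w /\ ~ A j w /\ ~ A k w).

Let bonferroni_term (i : nat) : R :=
  Pr P (A i)
  - (if Nat.eqb i j then 0 else Pr P (fun w => A i w /\ A j w))
  - (if orb (Nat.eqb i j) (Nat.eqb i k) then 0 else Pr P (fun w => A i w /\ A k w))
  + (if orb (Nat.eqb i j) (Nat.eqb i k) then 0
     else Pr P (fun w => A i w /\ A j w /\ A k w)).

Lemma event_union_upto : event P U.
Proof.
  apply (event_ext (fun w => exists i, (fun w => (1 <= i <= n)%nat /\ A i w) w));
    [intro; tauto|].
  apply event_union. intro i.
  destruct (Compare_dec.le_dec 1 i), (Compare_dec.le_dec i n).
  2-4: apply (event_ext (fun _ => False)); [intro; split; [tauto | lia] | apply event_empty].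
  apply (event_ext (A i)); [intro; split; [split; [lia | auto] | tauto] | apply hA; lia].
Qed.

Lemma Pr_union_upto_decomp : Pr P U = a + r + q.
Proof.
  pose proof event_union_upto. pose proof (hA j hj). pose proof (hA k hk).
  rewrite (Pr_split U (A j)), (Pr_split (fun w => U w /\ ~ A j w) (A k)) by events.
  rewrite (Pr_ext (fun w => U w /\ A j w) (A j))
    by (intro w; split; [tauto | intro; split; [exists j|]; auto]).
  unfold a, r, q.
  rewrite (Pr_ext (fun w => (U w /\ ~ A j w) /\ A k w) (fun w => U w /\ ~ A j w /\ A k w)),
    (Pr_ext (fun w => (U w /\ ~ A j w) /\ ~ A k w) (fun w => U w /\ ~ A j w /\ ~ A k w))
    by (intro; tauto).
  ring.
Qed.

Lemma bonferroni_term_le (i : nat) : (1 <= i <= n)%nat ->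
  bonferroni_term i <=
  q + (if Nat.eqb i j then a - q else 0)
    + (if Nat.eqb i k then (if Nat.eqb j k then 0 else r - q) else 0).
Proof.
  intros Hi. pose proof (hA i Hi). pose proof (hA j hj). pose proof (hA k hk).
  pose proof event_union_upto.
  unfold bonferroni_term.
  destruct (Nat.eqb_spec i j), (Nat.eqb_spec i k); simpl; subst.
  - rewrite Nat.eqb_refl. unfold a; lra.
  - unfold a; lra.
  - assert (Hr : Pr P (fun w => A k w /\ ~ A j w) <= r).
    { apply Pr_le; [events | events |].
      intros w [Hk Hj]. split; [exists k|]; auto. }
    rewrite (Pr_split (A k) (A j)) by auto.
    destruct (Nat.eqb_spec j k); [lia | lra].
  - assert (Hq : Pr P (fun w => A i w /\ ~ A j w /\ ~ A k w) <= q).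
    { apply Pr_le; [events | events |].
      intros w Hw. split; [exists i|]; tauto. }
    rewrite Pr_inter_compl2 by auto. lra.
Qed.

Lemma rsum_bonferroni_term_le : (2 < n + kdelta j k)%nat ->
  rsum bonferroni_term n <= (INR n - 2 + INR (kdelta j k)) * Pr P U.
Proof.
  intros hn.
  eapply Rle_trans; [apply rsum_le, bonferroni_term_le|].
  rewrite !rsum_plus, rsum_const, !rsum_indicator by auto.
  rewrite Pr_union_upto_decomp.
  pose proof event_union_upto. pose proof (hA j hj). pose proof (hA k hk).
  assert (0 <= a) by (apply Pr_nonneg; auto).
  assert (0 <= r) by (apply Pr_nonneg; events).
  assert (0 <= q) by (apply Pr_nonneg; events).
  unfold kdelta in *. destruct (Nat.eqb_spec j k); simpl INR.
  - assert (INR 2 <= INR n) by (apply le_INR; lia). simpl in *. nra.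
  - assert (INR 3 <= INR n) by (apply le_INR; lia). simpl in *. nra.
Qed.

End UnionLowerBound.
End ProbabilitySpace.

Theorem corollary3 (Omega : Type) (P : prob_space Omega) (n : nat)
  (A : nat -> (Omega -> Prop))
  (hA : forall i, (1 <= i <= n)%nat -> event P (A i))
  (j k : nat) (hj : (1 <= j <= n)%nat) (hk : (1 <= k <= n)%nat)
  (hn : (2 < n + kdelta j k)%nat) :
  Pr P (fun w => exists i, (1 <= i <= n)%nat /\ A i w) >=
  / (INR n - 2 + INR (kdelta j k)) *
  ( rsum (fun i => Pr P (A i)) n
  - rsum (fun i => if Nat.eqb i j then 0 else Pr P (fun w => A i w /\ A j w)) n
  - rsum (fun i => if orb (Nat.eqb i j) (Nat.eqb i k) then 0
                   else Pr P (fun w => A i w /\ A k w)) n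
  + rsum (fun i => if orb (Nat.eqb i j) (Nat.eqb i k) then 0
                   else Pr P (fun w => A i w /\ A j w /\ A k w)) n ).
Proof.
  rewrite <- 2!rsum_minus, <- rsum_plus.
  pose proof (rsum_bonferroni_term_le P n A hA j k hj hk hn) as Hsum.
  assert (Hm : 0 < INR n - 2 + INR (kdelta j k)).
  { assert (H2 : INR 2 < INR (n + kdelta j k)) by (apply lt_INR; exact hn).
    rewrite plus_INR in H2. simpl in H2. lra. }
  apply Rle_ge, (Rmult_le_reg_l _ _ _ Hm).
  rewrite <- Rmult_assoc, Rinv_r, Rmult_1_l by lra.
  exact Hsum.
Qed.
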